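(* Let $F(B_1,\dots,B_n)$ be a flower-polyhedron in $\mathbb{E}^d$ which is reduced along its boundary. Then $\ker_{\mathrm{s}}\big(F(B_1,\dots,B_n)\big)=\bigcap_{i=1}^n B_i$.
   Context: A lattice polynomial $F(x_1,\dots,x_n)$ is an expression built from the variables $x_1,\dots,x_n$ using the binary operations $\cap$ and $\cup$ with brackets indicating the order of evaluation, in which each variable occurs exactly once. A flower-polyhedron in $\mathbb{E}^d$ is a set $F(B_1,\dots,B_n)$ where $F$ is a lattice polynomial and $B_1,\dots,B_n$ are closed unit balls in $\mathbb{E}^d$. It is reduced along its boundary if the boundary of $F(B_1,\dots,B_n)$ intersects the boundary of each $B_i$ in a $(d-1)$-dimensional set. For $x,y\in\mathbb{E}^d$ the spindle $[x,y]_{\mathrm{s}}$ is the intersection of all closed unit balls containing $x$ and $y$ if $|x-y|\le2$, and $\mathbb{E}^d$ otherwise. For $A\subseteq\mathbb{E}^d$, $p\in A$: $\operatorname{st}_{\mathrm{s}}(p,A)=\{q\in A:[p,q]_{\mathrm{s}}\subseteq A\}$, and $\ker_{\mathrm{s}}A=\{p\in A:\operatorname{st}_{\mathrm{s}}(p,A)=A\}$. *)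

(* Euclidean space E^d is 'rV[R]_d, R : realType. *)
From HB Require Import structures.
From mathcomp Require Import all_boot all_order all_algebra.
From mathcomp Require Import all_classical all_reals all_analysis.
Set Implicit Arguments. Unset Strict Implicit. Unset Printing Implicit Defensive.
Import Order.TTheory GRing.Theory Num.Theory.
Import numFieldNormedType.Exports.
Local Open Scope classical_set_scope.
Local Open Scope ring_scope.

Section Defs.
Variables (R : realType) (d : nat).
Notation V := 'rV[R]_d.

Definition edist (x y : V) : R := Num.sqrt (\sum_(i < d) (x ord0 i - y ord0 i) ^+ 2).

Definition cball (c : V) : set V := [set x | edist c x <= 1].

Definition bd (A : set V) : set V := closure A `\` interior A.

Definition spindle (x y : V) : set V :=
  if edist x y <= 2 then \bigcap_(c in [set c | cball c x /\ cball c y]) cball c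
  else setT.

Definition spindle_star (p : V) (A : set V) : set V :=
  [set q | A q /\ spindle p q `<=` A].

Definition spindle_kernel (A : set V) : set V :=
  [set p | A p /\ spindle_star p A = A].

(* a subset S of the sphere bd (cball c) is (d-1)-dimensional:
   it contains a nonempty relatively open piece of the sphere *)
Definition full_dim_on_sphere (c : V) (S : set V) : Prop :=
  exists x r, bd (cball c) x /\ 0 < r /\
    [set y | bd (cball c) y /\ edist x y < r] `<=` S.
End Defs.

Inductive lpoly (n : nat) : Type :=
| LVar of 'I_n
| LCap of lpoly n & lpoly n
| LCup of lpoly n & lpoly n.

Fixpoint lvars n (F : lpoly n) : seq 'I_n :=
  match F with
  | LVar i => [:: i]
  | LCap F1 F2 => lvars F1 ++ lvars F2
  | LCup F1 F2 => lvars F1 ++ lvars F2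
  end.

(* each variable occurs exactly once *)
Definition lattice_polynomial n (F : lpoly n) : Prop :=
  perm_eq (lvars F) (enum 'I_n).

Fixpoint leval n T (F : lpoly n) (B : 'I_n -> set T) : set T :=
  match F with
  | LVar i => B i
  | LCap F1 F2 => leval F1 B `&` leval F2 B
  | LCup F1 F2 => leval F1 B `|` leval F2 B
  end.

Definition flower_polyhedron (R : realType) d n (F : lpoly n) (c : 'I_n -> 'rV[R]_d)
  : set 'rV[R]_d := leval F (fun i => cball (c i)).

Definition reduced_along_boundary (R : realType) d n (F : lpoly n)
  (c : 'I_n -> 'rV[R]_d) : Prop :=
  forall i, full_dim_on_sphere (c i)
    (bd (flower_polyhedron F c) `&` bd (cball (c i))).

From Pilot Require Import Defs.
From HB Require Import structures.
From mathcomp Require Import all_boot all_order all_algebra.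
From mathcomp Require Import all_classical all_reals all_analysis.
From mathcomp Require Import ring lra.
Set Implicit Arguments. Unset Strict Implicit. Unset Printing Implicit Defensive.
Import Order.TTheory GRing.Theory Num.Theory.
Import numFieldNormedType.Exports.
Local Open Scope classical_set_scope.
Local Open Scope ring_scope.

(* If p lies in every ball B_i, then p lies in F, and every spindle [p, q]
   with q in F lies in F: a spindle whose endpoints lie in a ball lies in that
   ball, and this property passes through intersections and unions.
   Conversely, let p be in the spindle kernel of F but outside some B_i.
   Reducedness provides a patch of the sphere bd B_i lying in bd F, and in it
   a point q lying on no sphere bd B_j with c_j <> c_i (found by moving along
   great circles, which needs d >= 2).  Near q each B_j is then empty,
   everything, or equal to B_i, hence so is F; since q is in bd F, F coincides
   with B_i near q.  But the spindle [p, q], which lies in F, contains points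
   arbitrarily close to q outside B_i, because p is outside B_i. *)

Section LatticePolynomial.
Variables (n : nat) (T : Type).
Implicit Types (F : lpoly n) (B : 'I_n -> set T).

Lemma leval_common F B p : (forall j, B j p) -> leval F B p.
Proof.
by move=> Bp; elim: F => [j|F1 IH1 F2 IH2|F1 IH1 F2 IH2] /=; [exact: Bp|split|left].
Qed.

Lemma leval_sub F B (S : set T) q :
  (forall j, B j q -> S `<=` B j) -> leval F B q -> S `<=` leval F B.
Proof.
move=> SB; elim: F => [j|F1 IH1 F2 IH2|F1 IH1 F2 IH2] /=; first exact: SB.
- by move=> [/IH1 S1 /IH2 S2] y Sy; split; [exact: S1|exact: S2].
- by move=> [/IH1 S1|/IH2 S2] y Sy; [left; exact: S1|right; exact: S2].
Qed.

End LatticePolynomial.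

Section LocalShape.
Variable T : Type.
Implicit Types P N A : set T.

Definition empty_full_or P N A : Prop :=
  [\/ forall y, N y -> ~ A y, forall y, N y -> A y | forall y, N y -> (A y <-> P y)].

Lemma empty_full_or_sub P N N' A :
  N' `<=` N -> empty_full_or P N A -> empty_full_or P N' A.
Proof.
by move=> N'N [] NA; [apply: Or31|apply: Or32|apply: Or33] => y /N'N; exact: NA.
Qed.

Lemma empty_full_or_setI P N A1 A2 : empty_full_or P N A1 ->
  empty_full_or P N A2 -> empty_full_or P N (A1 `&` A2).
Proof.
case=> h1 [] h2;
  first [ apply: Or31 => y Ny; move: (h1 y Ny) (h2 y Ny); rewrite /setI /=; tauto
        | apply: Or32 => y Ny; move: (h1 y Ny) (h2 y Ny); rewrite /setI /=; tauto
        | apply: Or33 => y Ny; move: (h1 y Ny) (h2 y Ny); rewrite /setI /=; tauto ].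
Qed.

Lemma empty_full_or_setU P N A1 A2 : empty_full_or P N A1 ->
  empty_full_or P N A2 -> empty_full_or P N (A1 `|` A2).
Proof.
case=> h1 [] h2;
  first [ apply: Or31 => y Ny; move: (h1 y Ny) (h2 y Ny); rewrite /setU /=; tauto
        | apply: Or32 => y Ny; move: (h1 y Ny) (h2 y Ny); rewrite /setU /=; tauto
        | apply: Or33 => y Ny; move: (h1 y Ny) (h2 y Ny); rewrite /setU /=; tauto ].
Qed.

Lemma leval_empty_full_or n (F : lpoly n) (B : 'I_n -> set T) P
    (G : set_system T) {GF : Filter G} :
  (forall j, exists2 N, G N & empty_full_or P N (B j)) ->
  exists2 N, G N & empty_full_or P N (leval F B).
Proof.
move=> Bj; elim: F => [j|F1 [N1 GN1 F1N] F2 [N2 GN2 F2N]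
                       |F1 [N1 GN1 F1N] F2 [N2 GN2 F2N]] //=;
  exists (N1 `&` N2); first [exact: filterI | idtac];
  have {}F1N := empty_full_or_sub (@subIsetl _ N1 N2) F1N;
  have {}F2N := empty_full_or_sub (@subIsetr _ N1 N2) F2N.
- exact: empty_full_or_setI.
- exact: empty_full_or_setU.
Qed.
End LocalShape.

Section Euclidean.
Variables (R : realType) (d : nat).
Notation V := 'rV[R]_d.
Implicit Types (u v w x y z c p q : V).

Definition dot u v : R := \sum_k u ord0 k * v ord0 k.

Definition sqnorm u : R := dot u u.

Lemma dotC u v : dot u v = dot v u.
Proof. by apply: eq_bigr => k _; rewrite mulrC. Qed.

Lemma dotDl u w v : dot (u + w) v = dot u v + dot w v.
Proof. by rewrite /dot -big_split; apply: eq_bigr => k _; rewrite mxE mulrDl. Qed.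

Lemma dotNl u v : dot (- u) v = - dot u v.
Proof. by rewrite /dot -sumrN; apply: eq_bigr => k _; rewrite mxE mulNr. Qed.

Lemma dotZl (a : R) u v : dot (a *: u) v = a * dot u v.
Proof. by rewrite /dot mulr_sumr; apply: eq_bigr => k _; rewrite mxE mulrA. Qed.

Lemma dotDr u w v : dot v (u + w) = dot v u + dot v w.
Proof. by rewrite !(dotC v) dotDl. Qed.

Lemma dotNr u v : dot v (- u) = - dot v u.
Proof. by rewrite !(dotC v) dotNl. Qed.

Lemma dotZr (a : R) u v : dot v (a *: u) = a * dot v u.
Proof. by rewrite !(dotC v) dotZl. Qed.

Lemma dot_delta k v : dot (delta_mx ord0 k) v = v ord0 k.
Proof.
rewrite /dot (bigD1 k) //= big1 ?addr0; first by rewrite mxE !eqxx mul1r.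
by move=> j /negbTE jk; rewrite mxE jk andbF mul0r.
Qed.

Ltac expand_dot := rewrite /sqnorm ?(dotDl, dotDr, dotNl, dotNr, dotZl, dotZr).

Lemma sqnorm_ge0 u : 0 <= sqnorm u.
Proof. by apply: sumr_ge0 => k _; rewrite -expr2 sqr_ge0. Qed.

Lemma sqnorm_gt0 u : u != 0 -> 0 < sqnorm u.
Proof.
move=> u0; rewrite lt_def sqnorm_ge0 andbT; apply: contra u0 => /eqP u2.
have sq_ge0 k : xpredT k -> 0 <= u ord0 k * u ord0 k by rewrite -expr2 sqr_ge0.
apply/eqP/rowP => k.
have := @psumr_eq0P _ _ xpredT (fun k => u ord0 k * u ord0 k) sq_ge0 u2 k isT.
by rewrite mxE => /eqP; rewrite mulf_eq0 orbb => /eqP.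
Qed.

Lemma sqnorm0 : sqnorm 0 = 0 :> R.
Proof. by rewrite /sqnorm /dot big1 // => k _; rewrite mxE mul0r. Qed.

Lemma sqnormN u : sqnorm (- u) = sqnorm u.
Proof. by expand_dot; rewrite opprK. Qed.

Lemma sqnorm_distC x y : sqnorm (x - y) = sqnorm (y - x).
Proof. by rewrite -opprB sqnormN. Qed.

Lemma sqnormZ (a : R) u : sqnorm (a *: u) = a ^+ 2 * sqnorm u.
Proof. by expand_dot; rewrite mulrA -expr2. Qed.

Lemma sqnormD u v : sqnorm (u + v) = sqnorm u + 2 * dot u v + sqnorm v.
Proof. by expand_dot; rewrite (dotC v u); ring. Qed.

Lemma sqnormB u v : sqnorm (u - v) = sqnorm u - 2 * dot u v + sqnorm v.
Proof. by rewrite sqnormD sqnormN dotNr; ring. Qed.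

Lemma sqnormD_le u v : sqnorm (u + v) <= 2 * sqnorm u + 2 * sqnorm v.
Proof. by have := sqnorm_ge0 (u - v); rewrite sqnormB sqnormD; lra. Qed.

Lemma normr_dot_le u v (t : R) :
  0 < t -> 2 * t * `|dot u v| <= sqnorm u + t ^+ 2 * sqnorm v.
Proof.
move=> t0; have := sqnorm_ge0 (u + t *: v); have := sqnorm_ge0 (u - t *: v).
rewrite sqnormB sqnormD sqnormZ dotZr.
by case: (lerP 0 (dot u v)) => [/ger0_norm|/ltr0_norm] ->; nra.
Qed.

Lemma sqr_coord_le_sqnorm u k : u ord0 k ^+ 2 <= sqnorm u.
Proof.
rewrite /sqnorm /dot (bigD1 k) //= -expr2 lerDl.
by apply: sumr_ge0 => j _; rewrite -expr2 sqr_ge0.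
Qed.

Lemma sqnorm_le_coord u (e : R) :
  (forall k, `|u ord0 k| <= e) -> sqnorm u <= d%:R * e ^+ 2.
Proof.
move=> ue; apply: (@le_trans _ _ (\sum_(k < d) e ^+ 2)).
  apply: ler_sum => k _; have := ue k; rewrite ler_norml => /andP[? ?]; nra.
by rewrite sumr_const card_ord mulr_natl.
Qed.

Lemma edist_sqnorm x y : Defs.edist x y = Num.sqrt (sqnorm (x - y)).
Proof.
by rewrite /Defs.edist /sqnorm /dot; congr Num.sqrt; apply: eq_bigr => k _;
  rewrite !mxE expr2.
Qed.

Lemma cballP c x : cball c x <-> sqnorm (c - x) <= 1.
Proof. by rewrite /cball /= edist_sqnorm -{1}(sqrtr1 R) ler_sqrt. Qed.

Lemma edist_ltP x y (r : R) :
  0 < r -> Defs.edist x y < r <-> sqnorm (x - y) < r ^+ 2.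
Proof.
move=> r0; rewrite edist_sqnorm -{1}(ger0_norm (ltW r0)) -sqrtr_sqr ltr_sqrt //.
by rewrite exprn_gt0.
Qed.

Lemma spindle_sub_cball c p q :
  cball c p -> cball c q -> spindle p q `<=` cball c.
Proof.
move=> cp cq y; rewrite /spindle.
suff -> : Defs.edist p q <= 2 by apply; split.
move/cballP: cp => cp; move/cballP: cq => cq.
have := sqnormD_le (p - c) (c - q); rewrite addrA subrK sqnorm_distC => pq.
rewrite edist_sqnorm -(@ger0_norm _ 2) // -sqrtr_sqr ler_sqrt ?sqr_ge0 //.
by rewrite expr2; lra.
Qed.

Lemma mx_ball_coord x y (e : R) :
  0 < e -> ball x e y <-> (forall k, `|x ord0 k - y ord0 k| < e).
Proof.
move=> e0; rewrite mx_norm_ball /ball_ /= [X in X < _]/Num.Def.normr /= mx_normrE.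
split=> [xy k|xy].
- apply: le_lt_trans xy.
  have -> : x ord0 k - y ord0 k = (x - y) ord0 k by rewrite !mxE.
  exact: (le_bigmax _ (fun ij => `|(x - y) ij.1 ij.2|) (ord0, k)).
- by apply/bigmax_ltP; split => // -[i k] _ /=; rewrite (ord1 i) !mxE.
Qed.

Lemma nbhs_coord x (A : set V) : nbhs x A <->
  exists2 e : R, 0 < e & forall y, (forall k, `|x ord0 k - y ord0 k| < e) -> A y.
Proof.
split=> [/nbhs_ballP[e e0 xA]|[e e0 xA]].
  by exists e => // y xy; apply: xA; apply/mx_ball_coord.
by apply/nbhs_ballP; exists e => // y /(mx_ball_coord _ _ e0) xy; exact: xA.
Qed.

Lemma nbhs_sqnorm_lt q (r : R) : 0 < r -> nbhs q [set y | sqnorm (q - y) < r].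
Proof.
move=> r0; apply/nbhs_coord.
pose e := Num.min 1 (r / (d%:R + 1)).
have e1 : e <= 1 by rewrite ge_min lexx.
have e0 : 0 < e by rewrite lt_min ltr01 divr_gt0 // ltr_wpDl.
have er : e * (d%:R + 1) <= r by rewrite -ler_pdivlMr ?ltr_wpDl // ge_min lexx orbT.
exists e => // y qy; rewrite /=.
have /sqnorm_le_coord qye : forall k, `|(q - y) ord0 k| <= e.
  by move=> k; rewrite !mxE; exact/ltW/qy.
have : (d%:R : R) * e ^+ 2 <= d%:R * e by rewrite ler_wpM2l // expr2 ger_pMr.
lra.
Qed.

Lemma nbhs_sqnormP q (A : set V) :
  nbhs q A -> exists2 r, 0 < r & forall y, sqnorm (q - y) < r -> A y.
Proof.
move=> /nbhs_coord[e e0 qA]; exists (e ^+ 2) => [|y qy]; first exact: exprn_gt0.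
apply: qA => k; have := sqr_coord_le_sqnorm (q - y) k; rewrite !mxE => qyk.
have : `|q ord0 k - y ord0 k| ^+ 2 < e ^+ 2.
  by rewrite real_normK ?num_real //; exact: le_lt_trans qyk qy.
by have := normr_ge0 (q ord0 k - y ord0 k); nra.
Qed.

Lemma sqnorm_dist_near c q (eps : R) : 0 < eps -> exists2 r, 0 < r &
  forall y, sqnorm (q - y) < r -> `|sqnorm (c - y) - sqnorm (c - q)| < eps.
Proof.
move=> e0; have b0 := sqnorm_ge0 (c - q).
pose t := eps / (4 * (sqnorm (c - q) + 1)).
have t0 : 0 < t by rewrite divr_gt0 // mulr_gt0 // ltr_wpDl.
have tb : t * sqnorm (c - q) <= eps / 4.
  have : t * (4 * (sqnorm (c - q) + 1)) = eps.
    by rewrite /t mulfVK // gt_eqF // mulr_gt0 // ltr_wpDl.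
  lra.
exists (Num.min (eps / 4) (t * eps / 4)) => [|y].
  by rewrite lt_min !divr_gt0 // mulr_gt0.
rewrite lt_min => /andP[qye qyt].
have -> : c - y = (q - y) + (c - q) by rewrite [RHS]addrC addrA subrK.
rewrite sqnormD addrK.
have ab : 2 * `|dot (q - y) (c - q)| < eps / 2.
  rewrite -(ltr_pM2l t0); have := normr_dot_le (q - y) (c - q) t0.
  have : t * (t * sqnorm (c - q)) <= t * (eps / 4) by rewrite ler_wpM2l // ltW.
  lra.
have := ler_norm (dot (q - y) (c - q)); have := ler_norm (- dot (q - y) (c - q)).
rewrite normrN ltr_norml; have := sqnorm_ge0 (q - y).
move=> *; apply/andP; split; lra.
Qed.

Lemma bd_cballP c x : bd (cball c) x <-> sqnorm (c - x) = 1.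
Proof.
split=> [[cl_x int_x]|cx].
  case: (ltgtP (sqnorm (c - x)) 1) => // cx.
  - have [|r r0 near_x] := sqnorm_dist_near c x (_ : 0 < 1 - sqnorm (c - x)).
      by rewrite subr_gt0.
    exfalso; apply: int_x; apply: filterS (nbhs_sqnorm_lt x r0) => y /near_x.
    by rewrite ltr_norml => /andP[_ ?]; apply/cballP; lra.
  - have [|r r0 near_x] := sqnorm_dist_near c x (_ : 0 < sqnorm (c - x) - 1).
      by rewrite subr_gt0.
    have [y [/cballP cy /near_x]] := cl_x _ (nbhs_sqnorm_lt x r0).
    by rewrite ltr_norml => /andP[? _]; lra.
split; first by apply: subset_closure; apply/cballP; rewrite cx.
move=> /nbhs_sqnormP[r r0 xB].
pose t := Num.min 1 (r / 2).
have t1 : t <= 1 by rewrite ge_min lexx.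
have t2 : t <= r / 2 by rewrite ge_min lexx orbT.
have t0 : 0 < t by rewrite lt_min ltr01 divr_gt0.
have /xB/cballP : sqnorm (x - (x + t *: (x - c))) < r.
  by rewrite opprD addrA subrr add0r sqnormN sqnormZ sqnorm_distC cx mulr1; nra.
have -> : c - (x + t *: (x - c)) = - ((1 + t) *: (x - c)).
  by apply/rowP => k; rewrite !mxE; ring.
by rewrite sqnormN sqnormZ sqnorm_distC cx; nra.
Qed.

Lemma exists_orthogonal u : (2 <= d)%N -> exists2 e, e != 0 & dot u e = 0.
Proof.
move=> d2; pose k : 'I_d := Ordinal (leq_trans (isT : 0 < 2)%N d2).
pose l : 'I_d := Ordinal d2.
have lk : (l == k) = false by [].
case: (eqVneq (u ord0 k) 0) => uk.
  exists (delta_mx ord0 k); last by rewrite dotC dot_delta.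
  by apply/eqP => /rowP/(_ k); rewrite !mxE !eqxx => /eqP; rewrite oner_eq0.
exists (u ord0 l *: delta_mx ord0 k - u ord0 k *: delta_mx ord0 l).
  apply: contra uk => /eqP/rowP/(_ l); rewrite !mxE !eqxx lk mulr0 mulr1 sub0r.
  by move=> /eqP; rewrite oppr_eq0.
by expand_dot; rewrite !(dotC u) !dot_delta mulrC subrr.
Qed.

(* A rational parametrisation of the great circle through u in direction e. *)
Definition sphere_path u e (t : R) : V :=
  (1 + sqnorm e * t ^+ 2)^-1 *: ((1 - sqnorm e * t ^+ 2) *: u + (2 * t) *: e).

Section SpherePath.
Variables (u e : V) (t : R).
Hypotheses (u1 : sqnorm u = 1) (ue : dot u e = 0).

Let path_den_neq0 : 1 + sqnorm e * t ^+ 2 != 0.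
Proof. by rewrite gt_eqF // ltr_pwDl // mulr_ge0 ?sqnorm_ge0 ?sqr_ge0. Qed.

Lemma sqnorm_sphere_path : sqnorm (sphere_path u e t) = 1.
Proof.
rewrite /sphere_path; expand_dot; rewrite -/(sqnorm u) -/(sqnorm e) (dotC e u).
by rewrite u1 ue; field; exact: path_den_neq0.
Qed.

Lemma sqnorm_sphere_path_sub :
  sqnorm (sphere_path u e t - u) =
  4 * sqnorm e * t ^+ 2 / (1 + sqnorm e * t ^+ 2).
Proof.
rewrite /sphere_path; expand_dot; rewrite -/(sqnorm u) -/(sqnorm e) (dotC e u).
by rewrite u1 ue; field; exact: path_den_neq0.
Qed.

End SpherePath.

Lemma dot_sphere_path u e (t : R) m :
  dot (sphere_path u e t) m = ((1 - sqnorm e * t ^+ 2) * dot u m + 2 * t * dot e m)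
                              / (1 + sqnorm e * t ^+ 2).
Proof. by rewrite /sphere_path; expand_dot; rewrite mulrC. Qed.

Lemma sphere_point_off_sphere ci c' q0 (rho : R) : (2 <= d)%N ->
  sqnorm (q0 - ci) = 1 -> c' != ci -> 0 < rho ->
  exists q, [/\ sqnorm (q - ci) = 1, sqnorm (q - q0) < rho & sqnorm (q - c') != 1].
Proof.
move=> d2 q0_on c'ci rho0.
have [q0_on'|] := eqVneq (sqnorm (q0 - c')) 1; last by exists q0; rewrite subrr sqnorm0.
set u := q0 - ci in q0_on; set m := c' - ci.
have on'E q : sqnorm (q - ci) = 1 ->
    (sqnorm (q - c') == 1) = (2 * dot (q - ci) m == sqnorm m).
  move=> q_on; have -> : q - c' = (q - ci) - m by rewrite opprB addrA subrK.
  by rewrite sqnormB q_on; apply/eqP/eqP; lra.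
have twice : 2 * dot u m = sqnorm m by apply/eqP; rewrite -on'E // q0_on'.
have m0 : m != 0 by rewrite /m subr_eq0.
have a0 : 0 < dot u m by have := sqnorm_gt0 m0; lra.
have [e e0 ue] := exists_orthogonal u d2.
have s0 := sqnorm_gt0 e0; set s := sqnorm e in s0.
pose t0 := Num.min 1 (rho / (4 * (s + 1))).
have t0_gt0 : 0 < t0 by rewrite lt_min ltr01 /= divr_gt0 //; lra.
have t0_le1 : t0 <= 1 by rewrite ge_min lexx.
have t0_rho : t0 * (4 * (s + 1)) <= rho.
  by rewrite -ler_pdivlMr; [rewrite ge_min lexx orbT | lra].
have [t [t_gt0 t_le t_ne]] : exists t, [/\ 0 < t, t <= t0 & dot u m * s * t != dot e m].
  have [t0E|] := eqVneq (dot u m * s * t0) (dot e m); last by exists t0.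
  exists (t0 / 2); split; [by rewrite divr_gt0 | lra |].
  rewrite -t0E; apply/eqP => h.
  have : 0 < dot u m * s * t0 by rewrite !mulr_gt0.
  nra.
have den_gt0 : 0 < 1 + s * t ^+ 2 by rewrite ltr_pwDl // mulr_ge0 ?sqr_ge0 // ltW.
exists (sphere_path u e t + ci); split.
- by rewrite addrK sqnorm_sphere_path.
- have -> : sphere_path u e t + ci - q0 = sphere_path u e t - u.
    by rewrite /u opprB addrA.
  rewrite sqnorm_sphere_path_sub // -/s ltr_pdivrMr //.
  have tt : t ^+ 2 <= t0 by rewrite expr2; nra.
  have : s * t ^+ 2 <= s * t0 by rewrite ler_wpM2l // ltW.
  nra.
- rewrite on'E ?addrK ?sqnorm_sphere_path // dot_sphere_path -/s -twice.
  have -> : 2 * (((1 - s * t ^+ 2) * dot u m + 2 * t * dot e m) / (1 + s * t ^+ 2)) =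
      2 * dot u m + 4 * t * (dot e m - dot u m * s * t) / (1 + s * t ^+ 2).
    by field; rewrite gt_eqF.
  rewrite -subr_eq0 addrAC subrr add0r.
  rewrite !mulf_neq0 ?invr_neq0 ?(gt_eqF t_gt0) ?(gt_eqF den_gt0) //.
  by rewrite subr_eq0 eq_sym.
Qed.

Lemma sphere_generic_point ci (l : seq V) q0 (rho : R) : (2 <= d)%N ->
  sqnorm (q0 - ci) = 1 -> 0 < rho ->
  exists q, [/\ sqnorm (q - ci) = 1, sqnorm (q - q0) < rho &
    {in l, forall c', c' != ci -> sqnorm (q - c') != 1}].
Proof.
move=> d2; elim: l q0 rho => [|c' l IH] q0 rho q0_on rho0.
  by exists q0; rewrite subrr sqnorm0.
have rho4 : 0 < rho / 4 by rewrite divr_gt0.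
have [q1 [q1_on q1q0 q1_off]] : exists q1, [/\ sqnorm (q1 - ci) = 1,
    sqnorm (q1 - q0) < rho / 4 & c' != ci -> sqnorm (q1 - c') != 1].
  have [->|c'ci] := eqVneq c' ci; first by exists q0; rewrite subrr sqnorm0.
  by have [q1 [? ? ?]] := sphere_point_off_sphere d2 q0_on c'ci rho4; exists q1.
have [r1 r1_gt0 near_q1] : exists2 r1, 0 < r1 &
    forall y, sqnorm (q1 - y) < r1 -> c' != ci -> sqnorm (y - c') != 1.
  have [->|c'ci] := eqVneq c' ci; first by exists 1.
  have := q1_off c'ci; rewrite sqnorm_distC -subr_eq0 -normr_gt0 => gap.
  have [r r0 near] := sqnorm_dist_near c' q1 gap.
  exists r => // y /near yc _; apply/eqP; rewrite sqnorm_distC => y_on.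
  by move: yc; rewrite y_on distrC ltxx.
have [|q [q_on qq1 q_off]] := IH q1 (Num.min r1 (rho / 4)) q1_on.
  by rewrite lt_min r1_gt0.
exists q; split => //.
- have := sqnormD_le (q - q1) (q1 - q0); rewrite addrA subrK.
  have : sqnorm (q - q1) < rho / 4 by apply: lt_le_trans qq1 _; rewrite ge_min lexx orbT.
  lra.
- move=> c'' /[1!in_cons] /orP[/eqP ->|c''l]; last exact: q_off.
  apply: near_q1; rewrite sqnorm_distC.
  by apply: lt_le_trans qq1 _; rewrite ge_min lexx.
Qed.

Lemma cball_empty_full_or P c q : cball c = P \/ sqnorm (c - q) != 1 ->
  exists2 N, nbhs q N & empty_full_or P N (cball c).
Proof.
case=> [<-|c_off]; first by exists setT; [exact: filterT | apply: Or33].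
have [|r r0 near] := sqnorm_dist_near c q (_ : 0 < `|sqnorm (c - q) - 1|).
  by rewrite normr_gt0 subr_eq0.
exists [set y | sqnorm (q - y) < r]; first exact: nbhs_sqnorm_lt.
case: ltgtP c_off near => // cq _ near; [apply: Or32|apply: Or31].
- move=> y /near; rewrite ltr_norml ltr0_norm ?subr_lt0 // => /andP[_ ?].
  by apply/cballP; lra.
- move=> y /near; rewrite ltr_norml gtr0_norm ?subr_gt0 // => /andP[? _] /cballP.
  lra.
Qed.

Lemma empty_full_or_bd P A N q : nbhs q N -> empty_full_or P N A -> bd A q ->
  forall y, N y -> A y <-> P y.
Proof.
move=> qN [A0|A1|//] [clA intA].
- by have [y [Ay Ny]] := clA _ qN; case: (A0 y Ny Ay).
- by exfalso; apply: intA; apply: filterS qN => y /A1.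
Qed.

Lemma escape_parameters (a b rho : R) : 2 * a < b -> a ^+ 2 <= b -> 0 < rho ->
  exists k l, [/\ 0 <= k, a < k, 0 < l <= 1,
    l * (b - 2 * k * a + k ^+ 2) <= b - 2 * k &
    l ^+ 2 * (b - 2 * k * a + k ^+ 2) < rho].
Proof.
move=> ab a2b rho0.
have b0 : 0 < b by nra.
have [k [k0 ak kb]] : exists k, [/\ 0 <= k, a < k & 2 * k < b].
  exists ((Num.max a 0 + b / 2) / 2).
  have am : a <= Num.max a 0 by rewrite le_max lexx.
  have m0 : 0 <= Num.max a 0 by rewrite le_max lexx orbT.
  have : Num.max a 0 < b / 2 by rewrite gt_max; apply/andP; split; lra.
  by split; lra.
have M0 : 0 <= b - 2 * k * a + k ^+ 2 by have := sqr_ge0 (k - a); nra.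
exists k; move: (b - 2 * k * a + k ^+ 2) M0 => M M0.
pose l := Num.min 1 (Num.min ((b - 2 * k) / (M + 1)) (rho / (M + 1))).
have l1 : l <= 1 by rewrite ge_min lexx.
have lbk : l * (M + 1) <= b - 2 * k.
  by rewrite -ler_pdivlMr; [rewrite !ge_min lexx !orbT | lra].
have lrho : l * (M + 1) <= rho.
  by rewrite -ler_pdivlMr; [rewrite !ge_min lexx !orbT | lra].
have l0 : 0 < l.
  have : 0 < (b - 2 * k) / (M + 1) by rewrite divr_gt0 //; lra.
  have : 0 < rho / (M + 1) by rewrite divr_gt0 //; lra.
  by rewrite !lt_min ltr01 => -> ->.
clearbody l.
have : l ^+ 2 * M <= l * M by rewrite expr2 -mulrA ler_piMl // mulr_ge0 // ltW.
by exists l; split; rewrite ?l0 ?l1 //; lra.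
Qed.

(* Think of q as the origin, u = c - q and w = p - q.  The witness
   l (w - k u) lies in every unit ball through 0 and w by a convex combination
   of the two constraints, and leaves the ball around u because k > <u, w>. *)
Lemma escape_vector u w (rho : R) : sqnorm u = 1 -> 1 < sqnorm (u - w) -> 0 < rho ->
  exists v, [/\ sqnorm v < rho, 1 < sqnorm (u - v) &
    forall z, sqnorm (z - w) <= 1 -> sqnorm z <= 1 -> sqnorm (z - v) <= 1].
Proof.
move=> u1 uw rho0; rewrite sqnormB u1 in uw.
have := sqnorm_ge0 (w - dot u w *: u); rewrite sqnormB sqnormZ dotZr u1 (dotC w u).
move=> cs; have [|//|k [l [k0 ak /andP[l0 l1] lM lrho]]] :=
  @escape_parameters (dot u w) (sqnorm w) rho _ _ rho0; [lra|nra|].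
have wk : sqnorm (w - k *: u) = sqnorm w - 2 * k * dot u w + k ^+ 2.
  by rewrite sqnormB sqnormZ dotZr u1 (dotC w u); ring.
have dotv z : dot z (l *: (w - k *: u)) = l * (dot z w - k * dot z u).
  by rewrite dotZr dotDr dotNr dotZr.
exists (l *: (w - k *: u)); split.
- by rewrite sqnormZ wk.
- rewrite sqnormB u1 sqnormZ wk dotv -/(sqnorm u) u1.
  have : 0 < l * (k - dot u w) by rewrite mulr_gt0 // subr_gt0.
  have : 0 <= l ^+ 2 * sqnorm (w - k *: u) by rewrite mulr_ge0 ?sqr_ge0 ?sqnorm_ge0.
  rewrite wk; lra.
- move=> z zw z1; rewrite sqnormB in zw.
  have := sqnorm_ge0 (z - u); rewrite sqnormB u1 => zu.
  rewrite sqnormB sqnormZ wk dotv.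
  have : 0 <= (1 - l) * (1 - sqnorm z) by rewrite mulr_ge0 // subr_ge0.
  have : 0 <= l * (1 - sqnorm z + 2 * dot z w - sqnorm w) by rewrite mulr_ge0 //; lra.
  have : 0 <= l * k * (1 - dot z u) by rewrite !mulr_ge0 //; lra.
  have : 0 <= l * (sqnorm w - 2 * k - l * (sqnorm w - 2 * k * dot u w + k ^+ 2)).
    by rewrite mulr_ge0 //; lra.
  lra.
Qed.

Lemma spindle_leaves_cball c p q (rho : R) : sqnorm (c - q) = 1 -> ~ cball c p ->
  0 < rho -> exists y, [/\ sqnorm (q - y) < rho, spindle p q y & ~ cball c y].
Proof.
move=> cq pc rho0.
have cp : 1 < sqnorm (c - p) by rewrite ltNge; apply/negP => /cballP.
have uw : 1 < sqnorm ((c - q) - (p - q)) by rewrite opprB addrA subrK.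
have [v [v_rho uv spv]] := escape_vector cq uw rho0.
have shift x : x - (q + v) = (x - q) - v by rewrite opprD addrA.
exists (q + v); split.
- by rewrite opprD addrA subrr sub0r sqnormN.
- rewrite /spindle; case: ifP => // _ c' [/cballP c'p /cballP c'q]; apply/cballP.
  rewrite shift; apply: spv => //.
  by rewrite opprB addrA subrK.
- by move/cballP; rewrite shift; lra.
Qed.

Lemma cap_sub_spindle_kernel n (F : lpoly n) (c : 'I_n -> V) :
  \bigcap_i cball (c i) `<=` spindle_kernel (flower_polyhedron F c).
Proof.
move=> p p_in; rewrite /flower_polyhedron.
have pB j : cball (c j) p by exact: p_in.
split; first exact: leval_common.
apply/seteqP; split=> q; first by case.
by move=> Fq; split=> //; apply: leval_sub Fq => j; exact: spindle_sub_cball.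
Qed.

Lemma spindle_kernel_sub_cball n (F : lpoly n) (c : 'I_n -> V) i : (2 <= d)%N ->
  full_dim_on_sphere (c i) (bd (flower_polyhedron F c) `&` bd (cball (c i))) ->
  spindle_kernel (flower_polyhedron F c) `<=` cball (c i).
Proof.
move=> d2 [x [r [/bd_cballP x_on [r0 patch]]]] p [_ kerp]; apply: contrapT => pout.
rewrite sqnorm_distC in x_on.
have [q [q_on qx q_off]] :=
  sphere_generic_point [seq c j | j <- enum 'I_n] d2 x_on (exprn_gt0 2 r0).
have [Fq_bd _] : (bd (flower_polyhedron F c) `&` bd (cball (c i))) q.
  apply: patch; split; first by apply/bd_cballP; rewrite sqnorm_distC.
  by apply/edist_ltP => //; rewrite sqnorm_distC.
have [N qN F_near] : exists2 N, nbhs q N &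
    empty_full_or (cball (c i)) N (flower_polyhedron F c).
  apply: leval_empty_full_or => j; apply: cball_empty_full_or.
  have [->|cji] := eqVneq (c j) (c i); [by left | right].
  by rewrite sqnorm_distC; apply: q_off cji; apply: map_f; rewrite mem_enum.
have F_ball := empty_full_or_bd qN F_near Fq_bd.
have Fq : flower_polyhedron F c q.
  by apply/(F_ball q (nbhs_singleton qN))/cballP; rewrite sqnorm_distC q_on.
have pq_sub : spindle p q `<=` flower_polyhedron F c by rewrite -kerp in Fq; case: Fq.
have [rho rho0 Nrho] := nbhs_sqnormP qN.
have [|y [qy pqy]] := spindle_leaves_cball (_ : sqnorm (c i - q) = 1) pout rho0.
  by rewrite sqnorm_distC.
by apply; apply/(F_ball y (Nrho y qy)); exact: pq_sub.
Qed.

End Euclidean.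

Theorem theorem2 (R : realType) (d n : nat) (F : lpoly n)
  (c : 'I_n -> 'rV[R]_d) :
  (2 <= d)%N ->
  lattice_polynomial F ->
  reduced_along_boundary F c ->
  spindle_kernel (flower_polyhedron F c) = \bigcap_i cball (c i).
Proof.
(* The argument does not need each variable to occur exactly once. *)
move=> d2 _ reduced; apply/seteqP; split; last exact: cap_sub_spindle_kernel.
by move=> p ker_p i _; exact: spindle_kernel_sub_cball d2 (reduced i) p ker_p.
Qed.
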